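(* Let $G$ be a $K_4$-free graph with $n$ vertices and $e$ edges, let $P$ be a greedy partition of $G$ with size $r=r(P)$, and let $r_2$ be the number of cliques of $P$ of size at least $2$. Then $e\le r(n-r)+r_2(n-r-r_2)$.
   Context: A good partition $P$ of $V(G)$ is a partition of $V(G)$ into disjoint sets $C_1, \dots, C_r$ (the cliques of $P$), each inducing a complete subgraph of $G$, indexed so that $|C_1|\le\dots\le |C_r|$; its size is $r(P)=r$. It is a greedy partition if for every $i\ge1$ the set $C_1\cup\dots\cup C_i$ induces a subgraph with no complete subgraph on $|C_i|+1$ vertices. For $K_4$-free $G$, every clique of $P$ has size $1$, $2$ or $3$. *)

From HB Require Import structures.
From mathcomp Require Import all_boot all_order all_algebra.
Set Implicit Arguments. Unset Strict Implicit. Unset Printing Implicit Defensive.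

Definition simple_graph (T : finType) (adj : rel T) : Prop :=
  (forall x y, adj x y = adj y x) /\ (forall x, ~~ adj x x).

Definition is_clique (T : finType) (adj : rel T) (A : {set T}) : bool :=
  [forall x in A, forall y in A, (x != y) ==> adj x y].

Definition K4_free (T : finType) (adj : rel T) : Prop :=
  forall A : {set T}, #|A| = 4 -> ~~ is_clique adj A.

Definition num_edges (T : finType) (adj : rel T) : nat :=
  #|[set A : {set T} | (#|A| == 2) && is_clique adj A]|.

(* Union of the first i cliques C_1 ∪ ... ∪ C_i of a sequence (0-indexed list). *)
Definition prefix_union (T : finType) (P : seq {set T}) (i : nat) : {set T} :=
  \bigcup_(j < i) nth set0 P j.

Definition good_partition (T : finType) (adj : rel T) (P : seq {set T}) : Prop :=
  [/\ forall C, C \in P -> C != set0,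
      forall C, C \in P -> is_clique adj C,
      forall i j, i < j -> j < size P -> [disjoint nth set0 P i & nth set0 P j],
      prefix_union P (size P) = [set: T]
    & sorted leq [seq #|C| | C : {set T} <- P]].

Definition greedy_partition (T : finType) (adj : rel T) (P : seq {set T}) : Prop :=
  good_partition adj P /\
  forall i, i < size P ->
    forall A : {set T}, A \subset prefix_union P i.+1 ->
      #|A| = #|nth set0 P i|.+1 -> ~~ is_clique adj A.

(* Induction on the number k of cliques already added, with the invariant
   e(C_1 ∪ ... ∪ C_k) <= k (n_k - k) + q_k (n_k - k - q_k), where n_k counts the
   covered vertices and q_k the non-singleton cliques among C_1, ..., C_k.
   Greediness means that no vertex x of C_1 ∪ ... ∪ C_k is adjacent to all of
   C_{k+1} (else x together with C_{k+1} is a clique on |C_{k+1}| + 1 vertices),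
   so adding C_{k+1}, which has c <= 3 vertices, creates at most C(c,2) edges
   inside it and at most n_k (c - 1) edges towards the previous cliques; this
   the invariant allows this increase for each of c = 1, 2, 3. *)
From HB Require Import structures.
From mathcomp Require Import all_boot all_order all_algebra.
From mathcomp Require Import zify.
Set Implicit Arguments. Unset Strict Implicit. Unset Printing Implicit Defensive.

Lemma leq_card_bigcup (T I : finType) (A : pred I) (F : I -> {set T}) :
  (#|\bigcup_(i in A) F i| <= \sum_(i in A) #|F i|)%N.
Proof.
elim/big_rec2: _ => [|i n U _ le]; first by rewrite cards0.
by rewrite (leq_trans (leq_card_setU _ _).1) // leq_add2l.
Qed.

Section Cliques.

Variables (T : finType) (adj : rel T).

Lemma cliqueP (A : {set T}) x y :
  is_clique adj A -> x \in A -> y \in A -> x != y -> adj x y.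
Proof.
move=> /forall_inP cl xA yA nxy.
by move: (cl x xA) => /forall_inP /(_ y yA) /implyP; apply.
Qed.

Lemma clique_subset (A B : {set T}) :
  A \subset B -> is_clique adj B -> is_clique adj A.
Proof.
move=> /subsetP sAB clB; apply/forall_inP => x xA; apply/forall_inP => y yA.
by apply/implyP; apply: cliqueP clB (sAB x xA) (sAB y yA).
Qed.

Lemma clique_setU1 (A : {set T}) x :
  (forall x y, adj x y = adj y x) -> is_clique adj A ->
  (forall y, y \in A -> adj x y) -> is_clique adj (x |: A).
Proof.
move=> sym clA adjx; apply/forall_inP => u uA; apply/forall_inP => v vA.
apply/implyP => nuv; move: uA vA nuv; rewrite !inE.
case/orP=> [/eqP->|uA] /orP[/eqP->|vA] nuv.
- by rewrite eqxx in nuv.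
- exact: adjx.
- by rewrite sym; apply: adjx.
- exact: cliqueP clA uA vA nuv.
Qed.

Lemma K4_free_clique_card (A : {set T}) :
  K4_free adj -> is_clique adj A -> (#|A| <= 3)%N.
Proof.
move=> k4 clA; rewrite leqNgt; apply/negP => A_gt3.
have : (0 < #|[set B : {set T} | B \subset A & #|B| == 4]|)%N.
  by rewrite cards_draws bin_gt0.
rewrite card_gt0 => /set0Pn[B]; rewrite inE => /andP[sBA /eqP B4].
by move: (k4 B B4); rewrite (clique_subset sBA clA).
Qed.

End Cliques.

Definition num_edges_in (T : finType) (adj : rel T) (U : {set T}) : nat :=
  #|[set A : {set T} | (A \subset U) && (#|A| == 2) && is_clique adj A]|.

Lemma num_edges_in0 (T : finType) (adj : rel T) : num_edges_in adj set0 = 0%N.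
Proof.
apply/eqP; rewrite cards_eq0; apply/eqP/setP => A.
by rewrite !inE subset0; case: eqP => // ->; rewrite cards0.
Qed.

Lemma num_edges_inT (T : finType) (adj : rel T) :
  num_edges_in adj [set: T] = num_edges adj.
Proof. by apply: eq_card => A; rewrite !inE subsetT. Qed.

Section AddClique.

Variables (T : finType) (adj : rel T).
Hypothesis adj_sym : forall x y, adj x y = adj y x.
Variables U C : {set T}.

Definition cross_edges : {set {set T}} :=
  \bigcup_(x in U) [set [set x; y] | y in [set y in C | adj x y]].

Lemma edges_setU_subset :
  [set A : {set T} | (A \subset U :|: C) && (#|A| == 2) && is_clique adj A]
  \subset [set A : {set T} | (A \subset U) && (#|A| == 2) && is_clique adj A]
          :|: [set A : {set T} | A \subset C & #|A| == 2] :|: cross_edges.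
Proof.
apply/subsetP => A; rewrite inE => /andP[/andP[sA A2] clA].
have [sAU|nAU] := boolP (A \subset U); first by rewrite !inE sAU A2 clA.
have [sAC|nAC] := boolP (A \subset C); first by rewrite !inE sAC A2 orbT.
move/cards2P: A2 => [a [b [nab eA]]].
have sab (Z : {set T}) : a \in Z -> b \in Z -> A \subset Z.
  by move=> aZ bZ; rewrite eA; apply/subsetP => z; rewrite !inE => /orP[]/eqP->.
have aA : a \in A by rewrite eA !inE eqxx.
have bA : b \in A by rewrite eA !inE eqxx orbT.
have ab := cliqueP clA aA bA nab.
apply/setUP; right; apply/bigcupP.
move: (subsetP sA a aA) (subsetP sA b bA); rewrite !inE => /orP[aU|aC] /orP[bU|bC].
- by rewrite sab in nAU.
- by exists a => //; apply/imsetP; exists b; rewrite // inE bC ab.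
- exists b => //; apply/imsetP; exists a; first by rewrite inE aC adj_sym.
  by rewrite eA setUC.
- by rewrite sab in nAC.
Qed.

Hypothesis U_non_neighbour : forall x, x \in U -> exists2 y, y \in C & ~~ adj x y.

Lemma card_cross_edges : (#|cross_edges| <= #|U| * #|C|.-1)%N.
Proof.
rewrite (leq_trans (leq_card_bigcup _ _)) // -sum_nat_const leq_sum // => x xU.
rewrite (leq_trans (leq_imset_card _ _)) //.
have [y yC nxy] := U_non_neighbour xU.
have : [set z in C | adj x z] \subset C :\ y.
  apply/subsetP => z; rewrite !inE => /andP[zC xz]; rewrite zC andbT.
  by apply: contraNneq nxy => <-.
by move/subset_leq_card/leq_trans; apply; rewrite (cardsD1 y C) yC.
Qed.

Lemma num_edges_in_setU :
  (num_edges_in adj (U :|: C) <= num_edges_in adj U + 'C(#|C|, 2) + #|U| * #|C|.-1)%N.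
Proof.
rewrite /num_edges_in (leq_trans (subset_leq_card edges_setU_subset)) //.
rewrite (leq_trans (leq_card_setU _ _).1) // leq_add //.
  by rewrite (leq_trans (leq_card_setU _ _).1) // cards_draws.
exact: card_cross_edges.
Qed.

End AddClique.

Section GreedyPartition.

Variables (T : finType) (adj : rel T) (P : seq {set T}).

Lemma prefix_unionS k : prefix_union P k.+1 = prefix_union P k :|: nth set0 P k.
Proof. by rewrite /prefix_union big_ord_recr. Qed.

Lemma disjoint_prefix_union k :
  good_partition adj P -> (k < size P)%N ->
  [disjoint prefix_union P k & nth set0 P k].
Proof.
case=> _ _ disjP _ _ kP; rewrite -setI_eq0; apply/eqP/setP => x.
rewrite !inE; apply/negbTE/negP => /andP[/bigcupP[i _ xi] xk].
by rewrite (disjointFr (disjP _ _ (ltn_ord i) kP) xi) in xk.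
Qed.

Lemma greedy_non_neighbour k x :
  simple_graph adj -> greedy_partition adj P -> (k < size P)%N ->
  x \in prefix_union P k -> exists2 y, y \in nth set0 P k & ~~ adj x y.
Proof.
move=> [sym _] [gp greedy] kP xU; set C := nth set0 P k.
have [/exists_inP[y yC nxy]|] := boolP [exists y in C, ~~ adj x y].
  by exists y.
rewrite negb_exists_in => /forall_inP adjx.
have xC : x \notin C by rewrite (disjointFr (disjoint_prefix_union gp kP) xU).
have [_ clP _ _ _] := gp.
have := greedy k kP (x |: C); rewrite prefix_unionS cardsU1 xC.
move=> /(_ _ erefl) /negP; case.
  by apply/subsetP => z; rewrite !inE => /orP[/eqP->|->]; rewrite ?xU ?orbT.
apply: clique_setU1 => // [|y yC]; first by apply/clP/mem_nth.
by move: (adjx y yC); rewrite negbK.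
Qed.

End GreedyPartition.

Local Open Scope ring_scope.

Definition edge_bound (n r r2 : nat) : int :=
  r%:Z * (n%:Z - r%:Z) + r2%:Z * (n%:Z - r%:Z - r2%:Z).

Lemma edge_bound_step (e e' n k q c : nat) :
  (0 < c <= 3)%N -> (k + q <= n)%N -> e%:Z <= edge_bound n k q ->
  (e' <= e + 'C(c, 2) + n * c.-1)%N ->
  e'%:Z <= edge_bound (n + c) k.+1 (q + (1 < c))
  /\ (k.+1 + (q + (1 < c)) <= n + c)%N.
Proof.
rewrite /edge_bound => /andP[]; case: c => [|[|[|[|c]]]] //= _ _ kq eb ee'.
- by rewrite bin_small //= in ee'; split; lia.
- by rewrite binn /= in ee'; split; lia.
- by rewrite bin2 /= in ee'; split; lia.
Qed.

Definition num_nontrivial (T : finType) (P : seq {set T}) : nat :=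
  count (fun C : {set T} => (2 <= #|C|)%N) P.

Lemma greedy_edge_bound (T : finType) (adj : rel T) (P : seq {set T}) k :
  simple_graph adj -> K4_free adj -> greedy_partition adj P -> (k <= size P)%N ->
  (num_edges_in adj (prefix_union P k))%:Z
    <= edge_bound #|prefix_union P k| k (num_nontrivial (take k P))
  /\ (k + num_nontrivial (take k P) <= #|prefix_union P k|)%N.
Proof.
move=> sg k4 [gp greedy]; elim: k => [_|k IH kP].
  by rewrite /prefix_union big_ord0 num_edges_in0 take0 cards0.
have [nonempty clP _ _ _] := gp.
have [IHe IHn] := IH (ltnW kP); set C := nth set0 P k.
have CP : C \in P by apply: mem_nth.
have cardUC : #|prefix_union P k.+1| = (#|prefix_union P k| + #|C|)%N.
  rewrite prefix_unionS cardsU -/C (_ : _ :&: C = set0) ?cards0 ?subn0 //.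
  by apply/eqP; rewrite setI_eq0 (disjoint_prefix_union gp kP).
have nontrivS : num_nontrivial (take k.+1 P)
                = (num_nontrivial (take k P) + (1 < #|C|))%N.
  by rewrite /num_nontrivial (take_nth set0 kP) -cats1 count_cat /= addn0.
have cardC : (0 < #|C| <= 3)%N.
  by rewrite card_gt0 nonempty // (K4_free_clique_card k4 (clP _ CP)).
rewrite cardUC nontrivS; apply: edge_bound_step cardC IHn IHe _.
rewrite prefix_unionS; apply: num_edges_in_setU; first exact: sg.1.
by move=> x; apply: greedy_non_neighbour.
Qed.

Theorem claim6 (T : finType) (adj : rel T) (P : seq {set T}) :
  simple_graph adj -> K4_free adj -> greedy_partition adj P ->
  let n : int := #|T|%:Z in
  let r : int := (size P)%:Z in
  let r2 : int := (count (fun C : {set T} => (2 <= #|C|)%N) P)%:Z in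
  ((num_edges adj)%:Z <= r * (n - r) + r2 * (n - r - r2))%R.
Proof.
move=> sg k4 gp /=.
have [[_ _ _ coverP _] _] := gp.
have [bound _] := greedy_edge_bound sg k4 gp (leqnn (size P)).
by move: bound; rewrite coverP take_size cardsT num_edges_inT.
Qed.
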